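(* Let $G=(V,E)$ be a graph with capacities $b_v\ge0$, demands $d_{u,e},d_{v,e}\ge0$ and profits $p_e\ge0$ for each edge $e=uv$, forming a conflict-free instance. Let $M'\subseteq E$ satisfy $\sum_{e\in\delta_{M'}(v)\setminus L(v)}d_{v,e}\le b_v$ for every $v\in V$, where $L(v)$ is a set of the two edges of $\delta_{M'}(v)$ with highest $d_{v,e}$ (or $L(v)=\delta_{M'}(v)$ if $|\delta_{M'}(v)|\le1$). Then one can find $M\subseteq M'$ with $\sum_{e\in\delta_M(v)}d_{v,e}\le b_v$ for all $v\in V$ and $p(M)\ge\frac{p(M')}{4}$.
   Context: The instance is conflict-free if for any two edges $e,f\in E$ and every vertex $v$, $\sum_{g\in\{e,f\}\cap\delta(v)}d_{v,g}\le b_v$. $\delta(v)$ is the set of edges incident to $v$, $\delta_{M'}(v)=\delta(v)\cap M'$, $p(M)=\sum_{e\in M}p_e$. *)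

From mathcomp Require Import all_boot all_order all_algebra.
Set Implicit Arguments. Unset Strict Implicit. Unset Printing Implicit Defensive.
Import Order.TTheory GRing.Theory Num.Theory.
Local Open Scope ring_scope.

(* A graph: finite vertex type V, finite edge type E, each edge e has two
   distinct endpoints (ends e).1 and (ends e).2 (parallel edges allowed). *)
Definition is_graph (V E : finType) (ends : E -> V * V) : Prop :=
  forall e, (ends e).1 != (ends e).2.

Definition delta (V E : finType) (ends : E -> V * V) (v : V) : {set E} :=
  [set e | ((ends e).1 == v) || ((ends e).2 == v)].

Definition deltaM (V E : finType) (ends : E -> V * V) (M : {set E}) (v : V)
  : {set E} := delta ends v :&: M.

Definition profit (R : numDomainType) (E : finType) (p : E -> R) (M : {set E}) : R :=
  \sum_(e in M) p e.

Definition conflict_free (R : numDomainType) (V E : finType) (ends : E -> V * V)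
  (b : V -> R) (d : V -> E -> R) : Prop :=
  forall (e f : E) (v : V),
    \sum_(g in [set e; f] :&: delta ends v) d v g <= b v.

Definition top_two (R : numDomainType) (E : finType) (w : E -> R)
  (S L : {set E}) : Prop :=
  [/\ L \subset S, #|L| = minn 2 #|S| &
      forall e f, e \in L -> f \in S :\: L -> w f <= w e].

From mathcomp Require Import all_boot all_order all_algebra.
Set Implicit Arguments. Unset Strict Implicit. Unset Printing Implicit Defensive.
Import Order.TTheory GRing.Theory Num.Theory.
Local Open Scope ring_scope.

(* Every vertex v tosses a coin: on heads it accepts only the (at most two)
   edges of L(v), which fit into b_v by conflict-freeness; on tails it accepts
   only the edges of delta_{M'}(v) outside L(v), which fit by hypothesis.  Keep
   the edges of M' accepted by both endpoints.  Since the endpoints of an edge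
   are distinct, each edge of M' survives for exactly a quarter of the coin
   assignments, so the profit averaged over all assignments is p(M')/4 and
   some assignment does at least as well. *)

Lemma ler_sum_subset (R : numDomainType) (I : finType) (A B : {set I}) (F : I -> R) :
  A \subset B -> (forall i, 0 <= F i) -> \sum_(i in A) F i <= \sum_(i in B) F i.
Proof.
move=> AB F_ge0; rewrite [X in _ <= X](big_setID A) /= (setIidPr AB) lerDl.
exact: sumr_ge0.
Qed.

Lemma exists_ge_average (R : realDomainType) (I : finType) (i0 : I) (F : I -> R) c :
  c *+ #|I| <= \sum_i F i -> exists i, c <= F i.
Proof.
move=> avg; case: (pickP (fun i => c <= F i)) => [i ci | small]; first by exists i.
suff : \sum_i F i < c *+ #|I| by rewrite ltNge avg.
rewrite -sumr_const; apply: ltr_sum => [|i _]; last by rewrite ltNge small.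
by apply/hasP; exists i0; rewrite ?mem_index_enum.
Qed.

Lemma sum_sets_by_multiplicity (R : nmodType) (I E : finType) (K : I -> {set E})
    (F : E -> R) :
  \sum_i \sum_(e in K i) F e = \sum_e F e *+ #|[set i | e \in K i]|.
Proof.
under eq_bigr do rewrite big_mkcond /=.
rewrite exchange_big /=; apply: eq_bigr => e _.
by rewrite -big_mkcond -sumr_const; apply: eq_bigl => i; rewrite inE.
Qed.

Lemma card_le2_cases (T : finType) (A : {set T}) :
  (#|A| <= 2)%N -> A = set0 \/ exists x y, A = [set x; y].
Proof.
move=> A_le2; rewrite -(set_enum A); move: A_le2; rewrite cardE.
case: (enum A) => [|x [|y [|z r]]] //= _.
- by left; apply/setP => w; rewrite !inE.
- by right; exists x, x; apply/setP => w; rewrite !inE orbb.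
- by right; exists x, y; apply/setP => w; rewrite !inE.
Qed.

Lemma conflict_free_sum_le2 (R : numDomainType) (V E : finType) (ends : E -> V * V)
    (b : V -> R) (d : V -> E -> R) (v : V) (S : {set E}) :
  conflict_free ends b d -> 0 <= b v ->
  (#|S| <= 2)%N -> S \subset delta ends v -> \sum_(e in S) d v e <= b v.
Proof.
move=> cf b_ge0 /card_le2_cases[-> | [e [f ->]]] S_inc; first by rewrite big_set0.
by have := cf e f v; rewrite (setIidPl S_inc).
Qed.

Section PinnedAssignments.
Variables (V : finType) (u v : V).
Hypothesis neq_uv : u != v.

Definition pinned (x y : bool) : {set {ffun V -> bool}} :=
  [set s : {ffun V -> bool} | (s u == x) && (s v == y)].

Definition flip2 (a c : bool) (s : {ffun V -> bool}) : {ffun V -> bool} :=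
  [ffun w => s w (+) ((w == u) && a) (+) ((w == v) && c)].

Lemma flip2K a c : involutive (flip2 a c).
Proof.
move=> s; apply/ffunP => w; rewrite !ffunE.
by case: (s w) (w == u) (w == v) a c => [] [] [] [] [].
Qed.

Lemma card_pinned_eq x y x' y' : #|pinned x y| = #|pinned x' y'|.
Proof.
rewrite -(card_preimset (pinned x' y') (can_inj (flip2K (x (+) x') (y (+) y')))).
apply: (@eq_card {ffun V -> bool}) => s.
rewrite !inE !ffunE !eqxx (eq_sym v) (negbTE neq_uv) /=.
by case: (s u) (s v) x x' y y' => [] [] [] [] [] [].
Qed.

Lemma card_pinned x y : (#|pinned x y| * 4)%N = #|{ffun V -> bool}|.
Proof.
have -> : #|{ffun V -> bool}| = (\sum_(x' : bool) \sum_(y' : bool) #|pinned x' y'|)%N.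
  under eq_bigr do under eq_bigr do rewrite -sum1dep_card big_mkcond /=.
  rewrite -sum1_card; under [RHS]eq_bigr do rewrite exchange_big /=.
  rewrite exchange_big /=; apply: eq_bigr => s _.
  by rewrite !big_bool /=; case: (s u); case: (s v).
under eq_bigr do under eq_bigr do rewrite (card_pinned_eq _ _ x y).
by rewrite !sum_nat_const card_bool mulnA mulnC.
Qed.

End PinnedAssignments.

Section CoinVotes.
Variables (V E : finType) (ends : E -> V * V) (M' : {set E}) (L : V -> {set E}).

Definition accepts (s : {ffun V -> bool}) (v : V) (e : E) : bool := s v == (e \in L v).

Definition accepted (s : {ffun V -> bool}) : {set E} :=
  [set e in M' | accepts s (ends e).1 e && accepts s (ends e).2 e].

Lemma accepted_sub s : accepted s \subset M'.
Proof. by apply/subsetP => e; rewrite inE => /andP[]. Qed.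

Lemma deltaM_accepted s v :
  deltaM ends (accepted s) v \subset (if s v then L v else deltaM ends M' v :\: L v).
Proof.
apply/subsetP => e; rewrite !inE => /andP[inc /and3P[eM acc1 acc2]].
have /eqP accv : accepts s v e by case/orP: inc => /eqP <-.
by case: (s v) accv => Lv; rewrite ?inE -Lv //= eM inc.
Qed.

Lemma keeping_assignments_pinned e : e \in M' ->
  [set s | e \in accepted s] =
  pinned (ends e).1 (ends e).2 (e \in L (ends e).1) (e \in L (ends e).2).
Proof. by move=> eM; apply/setP => s; rewrite !inE eM. Qed.

Lemma sum_profit_accepted (R : numDomainType) (p : E -> R) : is_graph ends ->
  (\sum_s profit p (accepted s)) *+ 4 = profit p M' *+ #|{ffun V -> bool}|.
Proof.
move=> graph; rewrite /profit sum_sets_by_multiplicity -!sumrMnl [RHS]big_mkcond /=.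
apply: eq_bigr => e _; rewrite -mulrnA.
case eM: (e \in M'); first by rewrite keeping_assignments_pinned // (card_pinned (graph e)).
by rewrite (_ : [set s | _] = set0) ?cards0 //; apply/setP => s; rewrite !inE eM.
Qed.

End CoinVotes.

Theorem lemma5 (R : realFieldType) (V E : finType) (ends : E -> V * V)
  (b : V -> R) (d : V -> E -> R) (p : E -> R) (M' : {set E}) (L : V -> {set E}) :
  is_graph ends ->
  (forall v, 0 <= b v) ->
  (forall v e, 0 <= d v e) ->
  (forall e, 0 <= p e) ->
  conflict_free ends b d ->
  (forall v, top_two (d v) (deltaM ends M' v) (L v)) ->
  (forall v, \sum_(e in deltaM ends M' v :\: L v) d v e <= b v) ->
  exists M : {set E},
    [/\ M \subset M',
        forall v, \sum_(e in deltaM ends M v) d v e <= b v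
      & profit p M >= profit p M' / 4].
Proof.
move=> graph b_ge0 d_ge0 _ cf top rest.
have [s avg] : exists s, profit p M' <= profit p (accepted ends M' L s) *+ 4.
  by apply: (exists_ge_average [ffun=> true]); rewrite sumrMnl sum_profit_accepted.
exists (accepted ends M' L s); split; first exact: accepted_sub.
- move=> v; apply: le_trans (ler_sum_subset (deltaM_accepted ends M' L s v) (d_ge0 v)) _.
  case: (s v); last exact: rest.
  have [L_sub L_card _] := top v.
  apply: conflict_free_sum_le2 => //; first by rewrite L_card geq_minl.
  exact: subset_trans L_sub (subsetIl _ _).
- by rewrite ler_pdivrMr // mulr_natr.
Qed.
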